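(* Let $x>0$, $y\ge 0$, $z>0$ (the approximation is intended for the regime $y,z\ll x$). Let $a=(y+z)/2$ and $g=\sqrt{yz}$. Then $$R_D(x,y,z)=\frac{3}{\sqrt x}\left(\frac{1}{g+z}-\frac{r}{4x}\right),$$ where $$\frac{1}{1-g/x}\ln\frac{2x}{a+g}-\frac{2z}{g+z}<r<\frac{1}{1-a/2x}\ln\frac{8x}{a+g}.$$
   Context: For $x,y\ge0$ not both zero and $z>0$: $R_D(x,y,z)=\frac32\int_0^\infty[(t+x)(t+y)]^{-1/2}(t+z)^{-3/2}\,dt$.
   Formalization: The regime $y,z\ll x$ is taken as the hypotheses g < x and a < 2x, both assumed in addition to x > 0, y ≥ 0, z > 0. The paper assumes this as well. *)

From Stdlib Require Import Reals.
From Coquelicot Require Import Coquelicot.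
Open Scope R_scope.

Definition RD_integrand (x y z t : R) : R :=
  3 / 2 * / sqrt ((t + x) * (t + y)) * / ((t + z) * sqrt (t + z)).

Definition is_RD (x y z v : R) : Prop :=
  is_RInt_gen (RD_integrand x y z) (at_right 0) (Rbar_locally p_infty) v.

From Stdlib Require Import Reals Lra.
From Coquelicot Require Import Coquelicot.
Open Scope R_scope.

(* Write the integrand as (3 / (2 sqrt x)) * sqrt (x / (t + x)) * w t, where
   w t = 1 / (S t * (t + z)) and S t = sqrt ((t + y) * (t + z)) satisfies t + g <= S t <= t + a.
   Three kernels have elementary primitives on (0, +oo):
     w t                          with primitive  -2 / (S t + t + z),
     1 / (S t * (S t + t + A))    with primitive  (ln (S t + t + a) - ln (S t + t + A)) / (A - a),
     t^2 / (t + N)^4              with primitive  t^3 / (3 N (t + N)^3).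
   Since sqrt (x / (t + x)) <= 1, the integrand is dominated by a multiple of w, so the improper
   integral converges.  With m = t / (t + x), the bounds
   2x / (t + 2x) <= sqrt (1 - m) <= 1 - m/2 - m^2/8 squeeze the integrand between combinations
   of the kernels (A = 4x - a from below, A = 2x - g from above), and integrating them gives the
   two bounds on r; the last kernel is what makes the lower bound strict. *)

Notation is_RInt_0_oo f l := (is_RInt_gen f (at_right 0) (Rbar_locally p_infty) l).

Lemma eventually_endpoints_pos :
  filter_prod (at_right 0) (Rbar_locally p_infty) (fun ab => 0 < fst ab /\ 0 < snd ab).
Proof.
  apply (Filter_prod _ _ _ (fun a => 0 < a) (fun b => 0 < b)); auto.
  - exists (mkposreal 1 Rlt_0_1); auto.
  - exists 0; auto.
Qed.

Lemma Rmin_pos_le a b t : 0 < a -> 0 < b -> Rmin a b <= t -> 0 < t.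
Proof. intros ha hb ht. apply Rlt_le_trans with (2 := ht). now apply Rmin_pos. Qed.

Lemma filterlim_p_infty_of_bound (G : R -> R) (l C : R) :
  (forall t, 0 < t -> Rabs (G t - l) <= C / t) ->
  filterlim G (Rbar_locally p_infty) (locally l).
Proof.
  intros hb.
  assert (hinv : is_lim (fun t => C * / t) p_infty 0).
  { replace (Finite 0) with (Rbar_mult C (Rbar_inv p_infty)) by (simpl; f_equal; ring).
    apply is_lim_scal_l, is_lim_inv; [apply is_lim_id | discriminate]. }
  assert (hlow : is_lim (fun t => l - C * / t) p_infty l).
  { replace (Finite l) with (Rbar_minus l 0) by (simpl; f_equal; ring).
    apply (is_lim_minus _ _ _ l 0); [apply is_lim_const | exact hinv |].
    apply Rbar_plus_correct. exact I. }
  assert (hup : is_lim (fun t => l + C * / t) p_infty l).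
  { replace (Finite l) with (Rbar_plus l 0) by (simpl; f_equal; ring).
    apply (is_lim_plus _ _ _ l 0); [apply is_lim_const | exact hinv |].
    apply Rbar_plus_correct. exact I. }
  refine (is_lim_le_le_loc _ _ _ _ _ _ hlow hup).
  exists 0. intros t ht. apply Rabs_le_between', hb, ht.
Qed.

Definition is_primitive_0_oo (G g : R -> R) (l : R) : Prop :=
  (forall t, 0 < t -> is_derive G t (g t)) /\ (forall t, 0 < t -> continuous g t) /\
  continuous G 0 /\ filterlim G (Rbar_locally p_infty) (locally l).

Lemma is_primitive_0_oo_scal (G g : R -> R) (l c : R) :
  is_primitive_0_oo G g l ->
  is_primitive_0_oo (fun t => c * G t) (fun t => c * g t) (c * l).
Proof.
  intros (hd & hc & hG0 & hGoo). split; [|split; [|split]].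
  - intros t ht. apply (is_derive_scal G), hd, ht.
  - intros t ht. apply (continuous_scal_r c g), hc, ht.
  - apply (continuous_scal_r c G), hG0.
  - exact (filterlim_comp _ _ _ _ _ _ _ _ hGoo (filterlim_scal_r c l)).
Qed.

Section Primitive.

Variables (G g : R -> R) (l : R).
Hypothesis hG : is_primitive_0_oo G g l.

Lemma is_RInt_primitive a b : 0 < a -> 0 < b -> is_RInt g a b (G b - G a).
Proof.
  destruct hG as (hd & hc & _). intros ha hb.
  apply (is_RInt_derive G g); intros t [ht _]; [apply hd | apply hc];
    exact (Rmin_pos_le a b t ha hb ht).
Qed.

Lemma filterlim_primitive_at_right_0 : filterlim G (at_right 0) (locally (G 0)).
Proof.
  destruct hG as (_ & _ & hG0 & _).
  exact (filterlim_filter_le_1 G (filter_le_within _) hG0).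
Qed.

Lemma is_RInt_0_oo_primitive : is_RInt_0_oo g (l - G 0).
Proof.
  assert (hlim : filterlim (fun ab : R * R => plus (G (snd ab)) (opp (G (fst ab))))
                   (filter_prod (at_right 0) (Rbar_locally p_infty))
                   (locally (plus l (opp (G 0))))).
  { refine (filterlim_comp_2 _ _ plus _ _ (filterlim_plus l (opp (G 0)))).
    - exact (filterlim_comp _ _ _ _ _ _ _ _ filterlim_snd (proj2 (proj2 (proj2 hG)))).
    - refine (filterlim_comp _ _ _ _ _ _ _ _ _ (filterlim_opp (G 0))).
      exact (filterlim_comp _ _ _ _ _ _ _ _ filterlim_fst filterlim_primitive_at_right_0). }
  intros P hP. unfold filtermapi.
  apply (filter_imp (fun ab => P (G (snd ab) - G (fst ab)) /\ 0 < fst ab /\ 0 < snd ab)).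
  - intros [a b] [hPab [ha hb]]. exists (G b - G a).
    split; [exact (is_RInt_primitive a b ha hb) | exact hPab].
  - apply filter_and; [exact (hlim P hP) | exact eventually_endpoints_pos].
Qed.

Variable f : R -> R.
Hypotheses (hf : forall t, 0 < t -> continuous f t)
  (hfg : forall t, 0 < t -> Rabs (f t) <= g t).

Lemma ex_RInt_pos a b : 0 < a -> 0 < b -> ex_RInt f a b.
Proof.
  intros ha hb. apply (@ex_RInt_continuous R_CompleteNormedModule). intros t [ht _]. apply hf.
  exact (Rmin_pos_le a b t ha hb ht).
Qed.

Lemma abs_RInt_le_primitive a b : 0 < a -> 0 < b -> Rabs (RInt f a b) <= Rabs (G b - G a).
Proof.
  assert (hle : forall a b, 0 < a -> 0 < b -> a <= b -> Rabs (RInt f a b) <= Rabs (G b - G a)).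
  { clear a b. intros a b ha hb hab.
    rewrite <- (is_RInt_unique g a b _ (is_RInt_primitive a b ha hb)).
    apply Rle_trans with (2 := Rle_abs _).
    apply Rle_trans with (1 := abs_RInt_le f a b hab (ex_RInt_pos a b ha hb)).
    apply RInt_le; [exact hab | | exists (G b - G a); exact (is_RInt_primitive a b ha hb) |].
    - apply (@ex_RInt_continuous R_CompleteNormedModule). intros t [ht _].
      apply (continuous_comp f Rabs), continuous_Rabs.
      apply hf. exact (Rmin_pos_le a b t ha hb ht).
    - intros t ht. apply hfg. lra. }
  intros ha hb. destruct (Rle_lt_dec a b) as [hab | hba].
  - exact (hle a b ha hb hab).
  - rewrite <- (opp_RInt_swap f b a (ex_RInt_pos b a hb ha)).
    change (Rabs (- RInt f b a) <= Rabs (G b - G a)). rewrite Rabs_Ropp, Rabs_minus_sym.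
    exact (hle b a hb ha (Rlt_le _ _ hba)).
Qed.

Lemma abs_RInt_sub_le_primitive a b a' b' :
  0 < a -> 0 < b -> 0 < a' -> 0 < b' ->
  Rabs (RInt f a' b' - RInt f a b) <= Rabs (G a - G a') + Rabs (G b' - G b).
Proof.
  intros ha hb ha' hb'.
  rewrite <- (RInt_Chasles f a' a b'), <- (RInt_Chasles f a b b'); auto using ex_RInt_pos.
  change (Rabs (RInt f a' a + (RInt f a b + RInt f b b') - RInt f a b)
          <= Rabs (G a - G a') + Rabs (G b' - G b)).
  replace (RInt f a' a + (RInt f a b + RInt f b b') - RInt f a b)
    with (RInt f a' a + RInt f b b') by ring.
  apply Rle_trans with (1 := Rabs_triang _ _).
  apply Rplus_le_compat; apply abs_RInt_le_primitive; assumption.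
Qed.

Lemma ex_RInt_0_oo_dominated : exists v, is_RInt_0_oo f v.
Proof.
  set (F := filter_prod (at_right 0) (Rbar_locally p_infty)).
  assert (hF : ProperFilter F)
    by exact (@filter_prod_proper _ _ _ _ (at_right_proper_filter 0) (Rbar_locally_filter p_infty)).
  destruct (proj1 (filterlim_locally_cauchy (F := F) (fun ab => RInt f (fst ab) (snd ab))))
    as [v hv].
  - intros eps.
    destruct (proj2 (filterlim_locally_cauchy G) (ex_intro _ (G 0) filterlim_primitive_at_right_0)
                (pos_div_2 eps)) as [P0 [hP0 hG0]].
    destruct (proj2 (filterlim_locally_cauchy G) (ex_intro _ l (proj2 (proj2 (proj2 hG))))
                (pos_div_2 eps)) as [P1 [hP1 hG1]].
    exists (fun ab => (0 < fst ab /\ P0 (fst ab)) /\ (0 < snd ab /\ P1 (snd ab))).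
    split.
    + apply (Filter_prod _ _ _ (fun a => 0 < a /\ P0 a) (fun b => 0 < b /\ P1 b)); auto.
      * apply filter_and; [exists (mkposreal 1 Rlt_0_1); auto | exact hP0].
      * apply filter_and; [exists 0; auto | exact hP1].
    + intros [a b] [a' b'] [[ha hPa] [hb hPb]] [[ha' hPa'] [hb' hPb']]. simpl in *.
      change (Rabs (RInt f a' b' - RInt f a b) < eps).
      assert (h0 : Rabs (G a' - G a) < eps / 2) by exact (hG0 a a' hPa hPa').
      assert (h1 : Rabs (G b' - G b) < eps / 2) by exact (hG1 b b' hPb hPb').
      rewrite Rabs_minus_sym in h0.
      pose proof (abs_RInt_sub_le_primitive a b a' b' ha hb ha' hb'). lra.
  - exists v. intros P hP. unfold filtermapi.
    apply (filter_imp (fun ab => P (RInt f (fst ab) (snd ab)) /\ 0 < fst ab /\ 0 < snd ab)).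
    + intros [a b] [hPab [ha hb]]. exists (RInt f a b).
      split; [apply (@RInt_correct R_CompleteNormedModule), ex_RInt_pos | exact hPab]; assumption.
    + apply filter_and; [exact (hv P hP) | exact eventually_endpoints_pos].
Qed.

End Primitive.

Lemma is_RInt_0_oo_ge0 (h : R -> R) (l : R) :
  is_RInt_0_oo h l -> (forall t, 0 < t -> 0 <= h t) -> 0 <= l.
Proof.
  intros hl hh.
  assert (hn : norm l <= l).
  { apply (@RInt_gen_norm R_CompleteNormedModule _ _ (at_right_proper_filter 0)
             (Rbar_locally_filter p_infty) h h l l); auto.
    - apply (Filter_prod _ _ _ (fun a => 0 < a < 1) (fun b => 1 < b)).
      + exists (mkposreal 1 Rlt_0_1). intros t ht ht0.
        change (Rabs (t - 0) < 1) in ht. apply Rabs_lt_between' in ht. lra.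
      + exists 1. auto.
      + simpl. intros a b ha hb. lra.
    - apply (filter_imp (fun ab => 0 < fst ab /\ 0 < snd ab)); [|exact eventually_endpoints_pos].
      intros [a b] [ha hb] t ht. simpl in *.
      assert (0 <= h t) by (apply hh; lra).
      change (Rabs (h t) <= h t). rewrite Rabs_pos_eq; lra. }
  pose proof (Rabs_pos l). change (Rabs l <= l) in hn. lra.
Qed.

Lemma is_RInt_0_oo_le (f g : R -> R) (lf lg : R) :
  is_RInt_0_oo f lf -> is_RInt_0_oo g lg -> (forall t, 0 < t -> f t <= g t) -> lf <= lg.
Proof.
  intros hf hg hfg.
  assert (h : 0 <= lg - lf).
  { apply (is_RInt_0_oo_ge0 _ _ (is_RInt_gen_minus g f lg lf hg hf)).
    intros t ht. specialize (hfg t ht). change (0 <= g t - f t). lra. }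
  lra.
Qed.

Lemma Rdiv_le_Rdiv_cross a b c d : 0 < b -> 0 < d -> a * d <= c * b -> a / b <= c / d.
Proof.
  intros hb hd h. apply (Rmult_le_reg_r (b * d)); [nra |].
  replace (a / b * (b * d)) with (a * d) by (field; lra).
  replace (c / d * (b * d)) with (c * b) by (field; lra). exact h.
Qed.

Lemma le_sqrt_of_sqr_le u v : 0 <= u -> u * u <= v -> u <= sqrt v.
Proof. intros hu h. rewrite <- (sqrt_square u hu). now apply sqrt_le_1_alt. Qed.

Lemma sqrt_le_of_le_sqr u v : 0 <= u -> v <= u * u -> sqrt v <= u.
Proof. intros hu h. rewrite <- (sqrt_square u hu). now apply sqrt_le_1_alt. Qed.

Lemma sqrt_mul_le_avg u v : 0 <= u -> 0 <= v -> sqrt (u * v) <= (u + v) / 2.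
Proof.
  intros hu hv. pose proof (Rle_0_sqr (u - v)). unfold Rsqr in *.
  apply sqrt_le_of_le_sqr; nra.
Qed.

Lemma ln_le_sub_1 u : 0 < u -> ln u <= u - 1.
Proof. intros hu. pose proof (exp_ineq1_le (ln u)) as h. rewrite exp_ln in h; lra. Qed.

Lemma ln_sub_ln_bounds u u' : 0 < u <= u' -> 0 <= ln u' - ln u <= (u' - u) / u.
Proof.
  intros hu. split.
  - pose proof (ln_le u u' (proj1 hu) (proj2 hu)). lra.
  - rewrite <- ln_div by lra.
    apply Rle_trans with (u' / u - 1); [apply ln_le_sub_1, Rdiv_lt_0_compat; lra |].
    right. field. lra.
Qed.

Lemma sqrt_one_sub_le m : 0 <= m <= 1 -> sqrt (1 - m) <= 1 - m / 2 - m ^ 2 / 8.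
Proof. intros hm. apply sqrt_le_of_le_sqr; nra. Qed.

Lemma ratio_le_sqrt x t : 0 < x -> 0 <= t -> 2 * x / (t + 2 * x) <= sqrt (x / (t + x)).
Proof.
  intros hx ht. apply le_sqrt_of_sqr_le; [apply Rlt_le, Rdiv_lt_0_compat; lra |].
  replace (2 * x / (t + 2 * x) * (2 * x / (t + 2 * x)))
    with (4 * x * x / ((t + 2 * x) * (t + 2 * x))) by (field; lra).
  apply Rdiv_le_Rdiv_cross; nra.
Qed.

Definition gap (N t : R) : R := t ^ 2 / (t + N) ^ 4.

Lemma is_RInt_gap N : 0 < N -> is_RInt_0_oo (gap N) (/ (3 * N)).
Proof.
  intros hN.
  assert (hG : is_primitive_0_oo (fun t => t ^ 3 / (3 * N * (t + N) ^ 3)) (gap N) (/ (3 * N))).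
  { split; [|split; [|split]].
    - intros t ht. unfold gap.
      auto_derive; [repeat split; apply Rgt_not_eq; repeat apply Rmult_lt_0_compat; lra |].
      field. lra.
    - intros t ht. apply (@ex_derive_continuous R_AbsRing R_NormedModule). unfold gap.
      auto_derive. repeat split; apply Rgt_not_eq; repeat apply Rmult_lt_0_compat; lra.
    - apply (@ex_derive_continuous R_AbsRing R_NormedModule).
      auto_derive. repeat split; apply Rgt_not_eq; repeat apply Rmult_lt_0_compat; lra.
    - apply (filterlim_p_infty_of_bound _ _ 1). intros t ht.
      replace (t ^ 3 / (3 * N * (t + N) ^ 3) - / (3 * N))
        with (- ((3 * t ^ 2 + 3 * t * N + N ^ 2) / (3 * (t + N) ^ 3))) by (field; lra).
      assert (0 < (t + N) ^ 3) by (apply pow_lt; lra).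
      rewrite Rabs_Ropp, Rabs_pos_eq by (apply Rlt_le, Rdiv_lt_0_compat; nra).
      apply Rdiv_le_Rdiv_cross; nra. }
  replace (/ (3 * N)) with (/ (3 * N) - 0 ^ 3 / (3 * N * (0 + N) ^ 3)) by (field; lra).
  exact (is_RInt_0_oo_primitive _ _ _ hG).
Qed.

Section Kernels.

Variables y z : R.
Hypotheses (hy : 0 <= y) (hz : 0 < z).

Local Notation a := ((y + z) / 2).
Local Notation g := (sqrt (y * z)).

Definition gm (t : R) : R := sqrt ((t + y) * (t + z)).

Lemma gm_sqr t : 0 <= t -> gm t * gm t = (t + y) * (t + z).
Proof. intros ht. apply sqrt_sqrt. nra. Qed.

Lemma gm_0 : gm 0 = g.
Proof. unfold gm. now rewrite !Rplus_0_l. Qed.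

Lemma gm_ge t : 0 <= t -> t + g <= gm t.
Proof.
  intros ht. pose proof (sqrt_mul_le_avg y z hy (Rlt_le _ _ hz)).
  pose proof (sqrt_pos (y * z)). pose proof (sqrt_sqrt (y * z)).
  apply le_sqrt_of_sqr_le; nra.
Qed.

Lemma gm_le t : 0 <= t -> gm t <= t + a.
Proof.
  intros ht. pose proof (sqrt_mul_le_avg (t + y) (t + z) ltac:(lra) ltac:(lra)). unfold gm. lra.
Qed.

Lemma continuous_gm t : continuous gm t.
Proof.
  apply continuous_sqrt_comp, (@ex_derive_continuous R_AbsRing R_NormedModule).
  auto_derive. exact I.
Qed.

Lemma continuous_gm_add B t : continuous (fun s => gm s + s + B) t.
Proof.
  apply (continuous_plus (fun s => gm s + s)); [|apply continuous_const].
  apply (continuous_plus gm); [apply continuous_gm | apply continuous_id].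
Qed.

Definition w (t : R) : R := / (gm t * (t + z)).

Definition v (A t : R) : R := / (gm t * (gm t + t + A)).

Lemma w_pos t : 0 < t -> 0 < w t.
Proof.
  intros ht. pose proof (gm_ge t (Rlt_le _ _ ht)). pose proof (sqrt_pos (y * z)).
  apply Rinv_0_lt_compat. nra.
Qed.

Lemma primitive_w : is_primitive_0_oo (fun t => -2 / (gm t + t + z)) w 0.
Proof.
  split; [|split; [|split]].
  - intros t ht. pose proof (gm_sqr t (Rlt_le _ _ ht)) as hS. pose proof (gm_ge t (Rlt_le _ _ ht)).
    pose proof (sqrt_pos (y * z)). unfold w, gm in *. auto_derive; [repeat split; nra |].
    set (S := sqrt _) in *. clearbody S.
    (* Eliminating y through S^2 = (t + y) (t + z) turns the claim into a rational identity. *)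
    replace (t + y) with (S * S / (t + z)) by (rewrite hS; field; lra).
    field. repeat split; nra.
  - intros t ht. pose proof (gm_ge t (Rlt_le _ _ ht)). pose proof (sqrt_pos (y * z)).
    apply (continuous_Rinv_comp (fun s => gm s * (s + z))); [|nra].
    apply (continuous_mult gm (fun s => s + z)); [apply continuous_gm |].
    apply (@ex_derive_continuous R_AbsRing R_NormedModule). auto_derive. exact I.
  - pose proof (gm_ge 0 (Rle_refl 0)). pose proof (sqrt_pos (y * z)).
    apply (continuous_scal_r (-2) (fun s => / (gm s + s + z))).
    apply (continuous_Rinv_comp (fun s => gm s + s + z)); [apply continuous_gm_add | lra].
  - apply (filterlim_p_infty_of_bound _ 0 2). intros t ht.
    pose proof (gm_ge t (Rlt_le _ _ ht)). pose proof (sqrt_pos (y * z)).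
    replace (-2 / (gm t + t + z) - 0) with (- (2 / (gm t + t + z))) by (field; lra).
    rewrite Rabs_Ropp, Rabs_pos_eq by (apply Rlt_le, Rdiv_lt_0_compat; lra).
    apply Rdiv_le_Rdiv_cross; lra.
Qed.

Lemma is_RInt_w : is_RInt_0_oo w (2 / (g + z)).
Proof.
  replace (2 / (g + z)) with (0 - -2 / (gm 0 + 0 + z)).
  - exact (is_RInt_0_oo_primitive _ _ _ primitive_w).
  - rewrite gm_0, Rplus_0_r. pose proof (sqrt_pos (y * z)). field. lra.
Qed.

Lemma continuous_ln_gm B t : 0 <= t -> 0 < B -> continuous (fun s => ln (gm s + s + B)) t.
Proof.
  intros ht hB. pose proof (gm_ge t ht). pose proof (sqrt_pos (y * z)).
  apply (continuous_comp (fun s => gm s + s + B) ln); [apply continuous_gm_add |].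
  apply continuous_ln. lra.
Qed.

Section Primitive_v.

Variable A : R.
Hypothesis hA : a < A.

Let G (t : R) : R := / (A - a) * (ln (gm t + t + a) - ln (gm t + t + A)).

Lemma primitive_v : is_primitive_0_oo G (v A) 0.
Proof.
  split; [|split; [|split]].
  - intros t ht. pose proof (gm_sqr t (Rlt_le _ _ ht)) as hS. pose proof (gm_ge t (Rlt_le _ _ ht)).
    pose proof (sqrt_pos (y * z)). unfold G, v, gm in *. auto_derive; [repeat split; nra |].
    set (S := sqrt _) in *. clearbody S.
    replace y with (S * S / (t + z) - t) by (rewrite hS; field; lra).
    field. repeat split; nra.
  - intros t ht. pose proof (gm_ge t (Rlt_le _ _ ht)). pose proof (sqrt_pos (y * z)).
    apply (continuous_Rinv_comp (fun s => gm s * (gm s + s + A))); [|nra].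
    apply (continuous_mult gm (fun s => gm s + s + A));
      [apply continuous_gm | apply continuous_gm_add].
  - apply (continuous_scal_r (/ (A - a)) (fun s => ln (gm s + s + a) - ln (gm s + s + A))).
    apply (continuous_minus (fun s => ln (gm s + s + a)));
      apply continuous_ln_gm; lra.
  - apply (filterlim_p_infty_of_bound _ 0 1). intros t ht.
    pose proof (gm_ge t (Rlt_le _ _ ht)). pose proof (sqrt_pos (y * z)).
    set (B0 := gm t + t + a). set (B1 := gm t + t + A).
    assert (hL : 0 <= ln B1 - ln B0 <= (B1 - B0) / B0)
      by (apply ln_sub_ln_bounds; unfold B0, B1; lra).
    replace (B1 - B0) with (A - a) in hL by (unfold B0, B1; ring).
    unfold G. fold B0 B1.
    replace (/ (A - a) * (ln B0 - ln B1) - 0) with (- (/ (A - a) * (ln B1 - ln B0))) by ring.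
    rewrite Rabs_Ropp, Rabs_pos_eq by (apply Rmult_le_pos; [apply Rlt_le, Rinv_0_lt_compat |]; lra).
    apply Rle_trans with (/ (A - a) * ((A - a) / B0));
      [apply Rmult_le_compat_l; [apply Rlt_le, Rinv_0_lt_compat |]; lra |].
    replace (/ (A - a) * ((A - a) / B0)) with (1 / B0) by (field; unfold B0; lra).
    apply Rdiv_le_Rdiv_cross; unfold B0; lra.
Qed.

Lemma is_RInt_v : is_RInt_0_oo (v A) ((ln (g + A) - ln (g + a)) / (A - a)).
Proof.
  replace ((ln (g + A) - ln (g + a)) / (A - a)) with (0 - G 0).
  - exact (is_RInt_0_oo_primitive _ _ _ primitive_v).
  - unfold G. rewrite gm_0, !Rplus_0_r. field. lra.
Qed.

End Primitive_v.

Lemma mul_w_le_v x t : a < 2 * x -> 0 < t -> t / (t + 2 * x) * w t <= 2 * v (4 * x - a) t.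
Proof.
  intros hax ht. pose proof (gm_ge t (Rlt_le _ _ ht)). pose proof (gm_le t (Rlt_le _ _ ht)).
  pose proof (sqrt_pos (y * z)). unfold w, v. set (S := gm t) in *.
  assert (0 < S * (t + z)) by nra. assert (0 < S * (S + t + (4 * x - a))) by nra.
  replace (t / (t + 2 * x) * / (S * (t + z))) with (t / ((t + 2 * x) * (S * (t + z))))
    by (field; lra).
  replace (2 * / (S * (S + t + (4 * x - a)))) with (2 / (S * (S + t + (4 * x - a))))
    by (field; lra).
  apply Rdiv_le_Rdiv_cross; [nra | lra |].
  replace (t * (S * (S + t + (4 * x - a)))) with (S * (t * (S + t + (4 * x - a)))) by ring.
  replace (2 * ((t + 2 * x) * (S * (t + z)))) with (S * (2 * (t + 2 * x) * (t + z))) by ring.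
  apply Rmult_le_compat_l; nra.
Qed.

Lemma v_le_mul_w x t : 0 < x -> 0 < t -> v (2 * x - g) t <= (t / (t + x) / 2 + z / (2 * x)) * w t.
Proof.
  intros hx ht. pose proof (gm_ge t (Rlt_le _ _ ht)). pose proof (sqrt_pos (y * z)).
  unfold w, v. set (S := gm t) in *.
  apply Rle_trans with (/ (S * (2 * (t + x)))).
  - apply Rinv_le_contravar; [nra | apply Rmult_le_compat_l; lra].
  - replace (/ (S * (2 * (t + x)))) with ((t / (t + x) / 2 + z / (2 * (t + x))) * / (S * (t + z)))
      by (field; lra).
    apply Rmult_le_compat_r; [apply Rlt_le, Rinv_0_lt_compat; nra |].
    assert (z / (2 * (t + x)) <= z / (2 * x)) by (apply Rdiv_le_Rdiv_cross; nra). lra.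
Qed.

Lemma gap_le_mul_w x t : 0 < x -> 0 < t -> gap (x + y + z) t <= (t / (t + x)) ^ 2 * w t.
Proof.
  intros hx ht. pose proof (gm_ge t (Rlt_le _ _ ht)). pose proof (gm_le t (Rlt_le _ _ ht)).
  pose proof (sqrt_pos (y * z)). unfold gap, w. set (S := gm t) in *.
  replace ((t / (t + x)) ^ 2 * / (S * (t + z))) with (t ^ 2 / ((t + x) ^ 2 * (S * (t + z))))
    by (field; lra).
  apply Rdiv_le_Rdiv_cross; [apply pow_lt; lra | apply Rmult_lt_0_compat; [apply pow_lt|]; nra |].
  apply Rmult_le_compat_l; [apply pow_le; lra |].
  replace ((t + (x + y + z)) ^ 4) with ((t + (x + y + z)) ^ 2 * (t + (x + y + z)) ^ 2) by ring.
  apply Rmult_le_compat; [apply pow_le; lra | nra | apply pow_incr; lra | nra].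
Qed.

End Kernels.

Section Carlson.

Variables x y z : R.
Hypotheses (hx : 0 < x) (hy : 0 <= y) (hz : 0 < z).

Local Notation a := ((y + z) / 2).
Local Notation g := (sqrt (y * z)).
Local Notation k := (3 / (2 * sqrt x)).
Local Notation RD_of r := (3 / sqrt x * (1 / (g + z) - r / (4 * x))).

Let sqrt_x_pos : 0 < sqrt x := sqrt_lt_R0 x hx.

Lemma RD_integrand_eq t : 0 < t -> RD_integrand x y z t = k * sqrt (x / (t + x)) * w y z t.
Proof.
  intros ht. pose proof sqrt_x_pos.
  assert (0 < sqrt (t + x)) by (apply sqrt_lt_R0; lra).
  assert (0 < sqrt (t + y)) by (apply sqrt_lt_R0; lra).
  assert (0 < sqrt (t + z)) by (apply sqrt_lt_R0; lra).
  unfold RD_integrand, w, gm.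
  rewrite sqrt_div, !sqrt_mult by lra.
  field. repeat split; lra.
Qed.

Lemma RD_integrand_le_mul_w t : 0 < t -> RD_integrand x y z t <= k * w y z t.
Proof.
  intros ht. rewrite (RD_integrand_eq t ht).
  pose proof sqrt_x_pos. pose proof (w_pos y z hy hz t ht).
  assert (sqrt (x / (t + x)) <= 1)
    by (apply sqrt_le_of_le_sqr; [lra | replace (1 * 1) with (1 / 1) by field;
                                        apply Rdiv_le_Rdiv_cross; lra]).
  assert (0 < k) by (apply Rdiv_lt_0_compat; lra).
  rewrite Rmult_assoc. apply Rmult_le_compat_l; nra.
Qed.

Lemma continuous_RD_integrand t : 0 < t -> continuous (RD_integrand x y z) t.
Proof.
  intros ht. assert (0 < sqrt ((t + x) * (t + y))) by (apply sqrt_lt_R0; nra).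
  assert (0 < sqrt (t + z)) by (apply sqrt_lt_R0; lra).
  apply (@ex_derive_continuous R_AbsRing R_NormedModule). unfold RD_integrand.
  auto_derive. repeat split; nra.
Qed.

Lemma ex_RD : exists v, is_RD x y z v.
Proof.
  apply (ex_RInt_0_oo_dominated _ _ _ (is_primitive_0_oo_scal _ _ _ k (primitive_w y z hy hz))).
  - exact continuous_RD_integrand.
  - intros t ht. pose proof sqrt_x_pos. pose proof (w_pos y z hy hz t ht).
    rewrite Rabs_pos_eq; [exact (RD_integrand_le_mul_w t ht) |].
    rewrite (RD_integrand_eq t ht).
    assert (0 < k) by (apply Rdiv_lt_0_compat; lra).
    pose proof (sqrt_pos (x / (t + x))).
    apply Rmult_le_pos; [apply Rmult_le_pos |]; lra.
Qed.

Lemma ex_RD_of : exists r, is_RD x y z (RD_of r).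
Proof.
  destruct ex_RD as [v hv]. pose proof sqrt_x_pos. pose proof (sqrt_pos (y * z)).
  exists (4 * x * (1 / (g + z) - v * sqrt x / 3)).
  replace (RD_of (4 * x * (1 / (g + z) - v * sqrt x / 3))) with v; [exact hv |].
  field. repeat split; lra.
Qed.

Lemma RD_of_le_iff r r' : RD_of r <= RD_of r' <-> r' <= r.
Proof.
  pose proof sqrt_x_pos. pose proof (sqrt_pos (y * z)).
  assert (e : RD_of r' - RD_of r = 3 / (4 * x * sqrt x) * (r - r')) by (field; lra).
  assert (hc : 0 < 3 / (4 * x * sqrt x)) by (apply Rdiv_lt_0_compat; nra).
  revert e hc. generalize (3 / (4 * x * sqrt x)) (RD_of r) (RD_of r').
  intros c u u' e hc. split; intros h; nra.
Qed.

Lemma is_RD_le l : is_RD x y z l -> l <= RD_of 0.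
Proof.
  intros hl. pose proof sqrt_x_pos. pose proof (sqrt_pos (y * z)).
  replace (RD_of 0) with (k * (2 / (g + z))) by (field; lra).
  apply (is_RInt_0_oo_le _ _ _ _ hl (is_RInt_gen_scal _ k _ (is_RInt_w y z hy hz))).
  exact RD_integrand_le_mul_w.
Qed.

Lemma is_RD_ge l :
  a < 2 * x -> is_RD x y z l ->
  RD_of (/ (1 - a / (2 * x)) * ln ((4 * x - a + g) / (a + g))) <= l.
Proof.
  intros hax hl. pose proof sqrt_x_pos. pose proof (sqrt_pos (y * z)).
  set (A := 4 * x - a). assert (hA : a < A) by (unfold A; lra).
  set (I := (ln (g + A) - ln (g + a)) / (A - a)).
  assert (hlow : is_RInt_0_oo (fun t => k * (w y z t - 2 * v y z A t)) (k * (2 / (g + z) - 2 * I)))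
    by exact (is_RInt_gen_scal _ k _ (is_RInt_gen_minus _ _ _ _ (is_RInt_w y z hy hz)
                (is_RInt_gen_scal _ 2 _ (is_RInt_v y z hy hz _ hA)))).
  replace (RD_of _) with (k * (2 / (g + z) - 2 * I)).
  - apply (is_RInt_0_oo_le _ _ _ _ hlow hl). intros t ht.
    rewrite (RD_integrand_eq t ht).
    pose proof (ratio_le_sqrt x t hx (Rlt_le _ _ ht)).
    pose proof (mul_w_le_v y z hy hz x t hax ht) as hm. fold A in hm.
    pose proof (w_pos y z hy hz t ht). assert (0 < k) by (apply Rdiv_lt_0_compat; lra).
    assert (e : 2 * x / (t + 2 * x) = 1 - t / (t + 2 * x)) by (field; lra).
    rewrite Rmult_assoc. apply Rmult_le_compat_l; [lra |].
    apply Rle_trans with (2 * x / (t + 2 * x) * w y z t); [rewrite e; lra |].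
    apply Rmult_le_compat_r; lra.
  - unfold I, A. rewrite ln_div by lra. rewrite (Rplus_comm a g).
    replace (4 * x - a + g) with (g + (4 * x - a)) by ring.
    field. repeat split; lra.
Qed.

Lemma is_RD_le_sharp l :
  a + g < 2 * x -> is_RD x y z l ->
  l <= RD_of (2 * x / (2 * x - g - a) * ln (2 * x / (a + g)) - 2 * z / (g + z)
              + x / (12 * (x + y + z))).
Proof.
  intros hag hl. pose proof sqrt_x_pos. pose proof (sqrt_pos (y * z)).
  set (A := 2 * x - g). assert (hA : a < A) by (unfold A; lra).
  set (N := x + y + z). assert (hN : 0 < N) by (unfold N; lra).
  set (I := (ln (g + A) - ln (g + a)) / (A - a)).
  assert (hup : is_RInt_0_oo
                  (fun t => k * ((1 + z / (2 * x)) * w y z t - v y z A t - / 8 * gap N t))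
                  (k * ((1 + z / (2 * x)) * (2 / (g + z)) - I - / 8 * / (3 * N))))
    by exact (is_RInt_gen_scal _ k _ (is_RInt_gen_minus _ _ _ _
                (is_RInt_gen_minus _ _ _ _ (is_RInt_gen_scal _ _ _ (is_RInt_w y z hy hz))
                   (is_RInt_v y z hy hz A hA))
                (is_RInt_gen_scal _ (/ 8) _ (is_RInt_gap N hN)))).
  replace (RD_of _) with (k * ((1 + z / (2 * x)) * (2 / (g + z)) - I - / 8 * / (3 * N))).
  - apply (is_RInt_0_oo_le _ _ _ _ hl hup). intros t ht.
    rewrite (RD_integrand_eq t ht).
    set (m := t / (t + x)).
    assert (hm : 0 <= m <= 1).
    { unfold m. split; [apply Rlt_le, Rdiv_lt_0_compat; lra |].
      replace 1 with (1 / 1) by field. apply Rdiv_le_Rdiv_cross; lra. }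
    replace (x / (t + x)) with (1 - m) by (unfold m; field; lra).
    pose proof (sqrt_one_sub_le m hm).
    pose proof (v_le_mul_w y z hy hz x t hx ht) as hv. fold A m in hv.
    pose proof (gap_le_mul_w y z hy hz x t hx ht) as hgap. fold N m in hgap.
    pose proof (w_pos y z hy hz t ht). assert (0 < k) by (apply Rdiv_lt_0_compat; lra).
    rewrite Rmult_assoc. apply Rmult_le_compat_l; [lra |].
    apply Rle_trans with ((1 - m / 2 - m ^ 2 / 8) * w y z t); [apply Rmult_le_compat_r; lra |].
    lra.
  - unfold I, A, N. rewrite ln_div by lra. rewrite (Rplus_comm a g).
    replace (g + (2 * x - g)) with (2 * x) by ring.
    field. repeat split; lra.
Qed.

Lemma RD_of_lt_upper r :
  a < 2 * x -> is_RD x y z (RD_of r) -> r < / (1 - a / (2 * x)) * ln (8 * x / (a + g)).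
Proof.
  intros hax hr. pose proof (sqrt_pos (y * z)). pose proof (sqrt_mul_le_avg y z hy (Rlt_le _ _ hz)).
  apply Rle_lt_trans with (/ (1 - a / (2 * x)) * ln ((4 * x - a + g) / (a + g))).
  - apply RD_of_le_iff, is_RD_ge; assumption.
  - apply Rmult_lt_compat_l.
    + replace (1 - a / (2 * x)) with ((2 * x - a) / (2 * x)) by (field; lra).
      apply Rinv_0_lt_compat, Rdiv_lt_0_compat; lra.
    + apply ln_increasing; [apply Rdiv_lt_0_compat; lra |].
      unfold Rdiv. apply Rmult_lt_compat_r; [apply Rinv_0_lt_compat |]; lra.
Qed.

Lemma RD_of_gt_lower r :
  g < x -> is_RD x y z (RD_of r) -> / (1 - g / x) * ln (2 * x / (a + g)) - 2 * z / (g + z) < r.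
Proof.
  intros hgx hr. pose proof (sqrt_pos (y * z)). pose proof (sqrt_mul_le_avg y z hy (Rlt_le _ _ hz)).
  replace (/ (1 - g / x)) with (x / (x - g)) by (field; lra).
  assert (0 < 2 * z / (g + z)) by (apply Rdiv_lt_0_compat; lra).
  destruct (Rlt_le_dec (a + g) (2 * x)) as [hag | hag].
  - pose proof (proj1 (RD_of_le_iff _ _) (is_RD_le_sharp _ hag hr)).
    assert (0 < ln (2 * x / (a + g))).
    { rewrite <- ln_1. apply ln_increasing; [lra |].
      apply (Rmult_lt_reg_r (a + g)); [lra |].
      unfold Rdiv. rewrite Rmult_assoc, Rinv_l by lra. lra. }
    assert (x / (x - g) <= 2 * x / (2 * x - g - a)) by (apply Rdiv_le_Rdiv_cross; nra).
    assert (0 < x / (12 * (x + y + z))) by (apply Rdiv_lt_0_compat; lra).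
    nra.
  - pose proof (proj1 (RD_of_le_iff _ _) (is_RD_le _ hr)).
    assert (ln (2 * x / (a + g)) <= 0).
    { rewrite <- ln_1. apply ln_le; [apply Rdiv_lt_0_compat; lra |].
      replace 1 with (1 / 1) by field. apply Rdiv_le_Rdiv_cross; lra. }
    assert (0 < x / (x - g)) by (apply Rdiv_lt_0_compat; lra).
    nra.
Qed.

End Carlson.

Theorem mainTheorem8 (x y z : R) (hx : 0 < x) (hy : 0 <= y) (hz : 0 < z)
  (hg : sqrt (y * z) < x) (ha : (y + z) / 2 < 2 * x) :
  let a := (y + z) / 2 in
  let g := sqrt (y * z) in
  exists r : R,
    / (1 - g / x) * ln (2 * x / (a + g)) - 2 * z / (g + z) < r /\
    r < / (1 - a / (2 * x)) * ln (8 * x / (a + g)) /\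
    is_RD x y z (3 / sqrt x * (1 / (g + z) - r / (4 * x))).
Proof.
  intros a g.
  destruct (ex_RD_of x y z hx hy hz) as [r hr].
  exists r. split; [|split].
  - exact (RD_of_gt_lower x y z hx hy hz r hg hr).
  - exact (RD_of_lt_upper x y z hx hy hz r ha hr).
  - exact hr.
Qed.
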